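(* Let $k$ be a positive integer, $G$ a graph and $e$ an edge of $G$. Then $\gamma_{P,k}(G)-1\le \gamma_{P,k}(G/e)\le \gamma_{P,k}(G)+1$. Moreover, if $\gamma_{P,k}(G/e)=\gamma_{P,k}(G)-1$ then $\mathrm{rad}_{P,k}(G)\le \mathrm{rad}_{P,k}(G/e)$, and if $\gamma_{P,k}(G/e)=\gamma_{P,k}(G)+1$ then $\mathrm{rad}_{P,k}(G/e)\le \mathrm{rad}_{P,k}(G)$.
   Context: All graphs are finite and simple. For an edge $e=xy$, the contraction $G/e$ is obtained from $G-e$ by replacing $x$ and $y$ by a new vertex $v_{xy}$ adjacent to all vertices of $N_{G-e}(x)\cup N_{G-e}(y)$ (other than $x,y$). $N_G[v]$ is the closed neighbourhood of $v$, and $N_G[S]$ the union of closed neighbourhoods of vertices of $S$. For $S\subseteq V(G)$, define $\mathcal{P}^{0}_{G,k}(S)=N_G[S]$ and $\mathcal{P}^{i+1}_{G,k}(S)=\bigcup\{N_G[v] : v\in \mathcal{P}^{i}_{G,k}(S),\ |N_G[v]\setminus \mathcal{P}^{i}_{G,k}(S)|\le k\}$; these increase and stabilize to $\mathcal{P}^{\infty}_{G,k}(S)$. $S$ is a $k$-power dominating set ($k$-PDS) if $\mathcal{P}^{\infty}_{G,k}(S)=V(G)$; $\gamma_{P,k}(G)$ is the minimum size of a $k$-PDS. For a $k$-PDS $S$, $\mathrm{rad}_{P,k}(G,S)=1+\min\{i:\mathcal{P}^{i}_{G,k}(S)=V(G)\}$, and $\mathrm{rad}_{P,k}(G)$ is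 the minimum of $\mathrm{rad}_{P,k}(G,S)$ over all $k$-PDS $S$ of $G$ with $|S|=\gamma_{P,k}(G)$. *)

From mathcomp Require Import all_boot.
From mathcomp Require Import boolp.

Set Implicit Arguments.
Unset Strict Implicit.
Unset Printing Implicit Defensive.

(* A finite simple graph is a symmetric irreflexive relation g on a finType T. *)

Section PowerDomination.
Variables (T : finType) (g : rel T) (k : nat).

Definition Nclosed (v : T) : {set T} := [set u | (u == v) || g v u].
Definition NS (S : {set T}) : {set T} := \bigcup_(v in S) Nclosed v.
Definition pstep (P : {set T}) : {set T} :=
  \bigcup_(v in P | #|Nclosed v :\: P| <= k) Nclosed v.
Definition Ppow (S : {set T}) (i : nat) : {set T} := iter i pstep (NS S).
Definition isPDS (S : {set T}) : Prop := exists i, Ppow S i = setT.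
End PowerDomination.

(* minimum of a (classical) set of naturals; 0 if empty (never used here) *)
Lemma minnat_ex (p : nat -> Prop) :
  (exists n, p n) -> exists n, (fun m => `[< p m >]) n.
Proof. by case=> n pn; exists n; apply/asboolP. Qed.

Definition minnat (p : nat -> Prop) : nat :=
  match pselect (exists n, p n) with
  | left H => ex_minn (minnat_ex H)
  | right _ => 0
  end.

Definition gammaPk (T : finType) (g : rel T) (k : nat) : nat :=
  minnat (fun n => exists S : {set T}, isPDS g k S /\ #|S| = n).

Definition radPkS (T : finType) (g : rel T) (k : nat) (S : {set T}) : nat :=
  (minnat (fun i => Ppow g k S i = setT)).+1.

Definition radPk (T : finType) (g : rel T) (k : nat) : nat :=
  minnat (fun r => exists S : {set T},
    [/\ isPDS g k S, #|S| = gammaPk g k & radPkS g k S = r]).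

(* Contraction G/e for e = xy: the vertex set is V(G) \ {y}, and the vertex
   x plays the role of the new vertex v_xy. *)
Definition contract (T : finType) (g : rel T) (x y : T)
  : rel {v : T | v != y} :=
  fun u w => (val u != val w) &&
    [|| g (val u) (val w), (val u == x) && g y (val w)
      | (val w == x) && g y (val u)].
Arguments contract {T} g x y.

From mathcomp Require Import all_boot.
From mathcomp Require Import boolp.

(* A k-PDS [S'] of G/e lifts to its preimage plus [x],
   and a k-PDS [S] of G pushes forward to its image plus [v_xy]; each costs at most one
   vertex. In either direction the new set contains a vertex whose closed neighbourhood
   covers both [x] and [y] (resp. [v_xy]), so from step 0 on the merged vertices are
   observed and a vertex has no more unobserved neighbours than its counterpart: the
   propagation sequences correspond step by step. A transfer map of this kind bounds
   gamma by gamma + 1 and, when that bound is attained, bounds the radius. *)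

Set Implicit Arguments.
Unset Strict Implicit.
Unset Printing Implicit Defensive.

Lemma minnatP (p : nat -> Prop) : (exists n, p n) -> p (minnat p).
Proof.
move=> ex; rewrite /minnat; case: pselect => [ex'|//].
by case: ex_minnP => m /asboolP.
Qed.

Lemma minnat_min (p : nat -> Prop) m : p m -> minnat p <= m.
Proof.
move=> pm; rewrite /minnat; case: pselect => [ex|[]]; last by exists m.
by case: ex_minnP => n _; apply; apply/asboolP.
Qed.

Section PowerDomination.
Variables (T : finType) (g : rel T) (k : nat).

Lemma in_Nclosed v u : (u \in Nclosed g v) = (u == v) || g v u.
Proof. by rewrite inE. Qed.

Lemma Nclosed_self v : v \in Nclosed g v.
Proof. by rewrite in_Nclosed eqxx. Qed.

Lemma Nclosed_sub_NS (S : {set T}) v : v \in S -> Nclosed g v \subset NS g S.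
Proof. by move=> vS; apply/subsetP => u uN; apply/bigcupP; exists v. Qed.

Lemma psteP (P : {set T}) u :
  reflect (exists2 v, (v \in P) && (#|Nclosed g v :\: P| <= k) & u \in Nclosed g v)
          (u \in pstep g k P).
Proof. exact: bigcupP. Qed.

Lemma pstep_mono (P Q : {set T}) : P \subset Q -> pstep g k P \subset pstep g k Q.
Proof.
move=> PQ; apply/subsetP => u /psteP [v /andP [vP c] uN]; apply/psteP; exists v => //.
by rewrite (subsetP PQ) //= (leq_trans _ c) // subset_leq_card // setDS.
Qed.

Lemma Nclosed_sub_pstep (P : {set T}) v :
  v \in P -> Nclosed g v \subset P -> Nclosed g v \subset pstep g k P.
Proof.
move=> vP NP; apply/subsetP => u uN; apply/psteP; exists v => //.
by move: NP; rewrite vP -setD_eq0 => /eqP ->; rewrite cards0.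
Qed.

Lemma Ppow_incr S i : Ppow g k S i \subset Ppow g k S i.+1.
Proof.
elim: i => [|i IH]; last exact: pstep_mono.
apply/subsetP => u /bigcupP [v vS uN].
have NvS := Nclosed_sub_NS vS.
exact: subsetP (Nclosed_sub_pstep (subsetP NvS _ (Nclosed_self v)) NvS) _ uN.
Qed.

Lemma Ppow_mono S i j : i <= j -> Ppow g k S i \subset Ppow g k S j.
Proof.
move=> ij; rewrite -(subnK ij); elim: (j - i) => [|d IH] //.
by rewrite addSn (subset_trans IH (Ppow_incr _ _)).
Qed.

Lemma NS_sub_Ppow S i : NS g S \subset Ppow g k S i.
Proof. exact: (Ppow_mono S (leq0n i)). Qed.

Lemma Ppow_set0 i : Ppow g k set0 i = set0.
Proof.
elim: i => [|i IH]; first by rewrite /Ppow /= /NS big_set0.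
by apply/setP => u; rewrite /Ppow iterS -/(Ppow g k set0 i) IH inE;
   apply/psteP => -[v]; rewrite inE.
Qed.

Lemma isPDS_setT : isPDS g k setT.
Proof.
exists 0; apply/eqP; rewrite eqEsubset subsetT /=; apply/subsetP => u _.
apply: subsetP (NS_sub_Ppow _ 0) _ _.
exact: subsetP (Nclosed_sub_NS (in_setT u)) _ (Nclosed_self u).
Qed.

Lemma gammaPk_witness : exists S, isPDS g k S /\ #|S| = gammaPk g k.
Proof.
apply: (minnatP (p := fun n => exists S, isPDS g k S /\ #|S| = n)).
by exists #|[set: T]|, setT; split=> //; exact: isPDS_setT.
Qed.

Lemma gammaPk_min S : isPDS g k S -> gammaPk g k <= #|S|.
Proof. by move=> PS; apply: minnat_min; exists S. Qed.

Lemma gammaPk_gt0 (t : T) : 0 < gammaPk g k.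
Proof.
have [S [[i PSi] <-]] := gammaPk_witness; rewrite card_gt0.
apply/negP => /eqP S0; move: PSi; rewrite S0 Ppow_set0 => /setP /(_ t).
by rewrite !inE.
Qed.

Lemma radPkS_reach S : isPDS g k S -> Ppow g k S (radPkS g k S).-1 = setT.
Proof. exact: minnatP. Qed.

Lemma radPkS_min S i : Ppow g k S i = setT -> radPkS g k S <= i.+1.
Proof. exact: minnat_min. Qed.

Lemma radPk_witness :
  exists S, [/\ isPDS g k S, #|S| = gammaPk g k & radPkS g k S = radPk g k].
Proof.
apply: (minnatP (p := fun r => exists S,
  [/\ isPDS g k S, #|S| = gammaPk g k & radPkS g k S = r])).
by have [S [PS cS]] := gammaPk_witness; exists (radPkS g k S), S.
Qed.

Lemma radPk_min S :
  isPDS g k S -> #|S| = gammaPk g k -> radPk g k <= radPkS g k S.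
Proof. by move=> PS cS; apply: minnat_min; exists S. Qed.

End PowerDomination.

Section Transfer.
Variables (T1 T2 : finType) (g1 : rel T1) (g2 : rel T2) (k : nat).
Variable F : {set T1} -> {set T2}.
Hypothesis card_F : forall S, #|F S| <= #|S|.+1.
Hypothesis Ppow_F : forall S i, Ppow g1 k S i = setT -> Ppow g2 k (F S) i = setT.

Lemma isPDS_transfer S : isPDS g1 k S -> isPDS g2 k (F S).
Proof. by case=> i PSi; exists i; apply: Ppow_F. Qed.

Lemma radPkS_transfer S : isPDS g1 k S -> radPkS g2 k (F S) <= radPkS g1 k S.
Proof.
move=> PS; rewrite -[radPkS g1 k S]prednK //.
exact/radPkS_min/Ppow_F/radPkS_reach.
Qed.

Lemma gammaPk_transfer : gammaPk g2 k <= gammaPk g1 k + 1.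
Proof.
have [S [PS <-]] := gammaPk_witness g1 k.
by rewrite addn1 (leq_trans (gammaPk_min (isPDS_transfer PS))).
Qed.

Lemma radPk_transfer :
  gammaPk g2 k = gammaPk g1 k + 1 -> radPk g2 k <= radPk g1 k.
Proof.
move=> gamma21; have [S [PS cS <-]] := radPk_witness g1 k.
apply: leq_trans (radPkS_transfer PS); apply: radPk_min (isPDS_transfer PS) _.
apply/eqP; rewrite eqn_leq (gammaPk_min (isPDS_transfer PS)) andbT.
by rewrite gamma21 -cS addn1 card_F.
Qed.

End Transfer.

Section Contraction.
Variables (T : finType) (g : rel T).
Hypotheses (gsym : symmetric g) (girr : irreflexive g).
Variables (x y : T).
Hypothesis exy : g x y.

Local Notation T' := {v : T | v != y}.
Local Notation g' := (contract g x y).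

Lemma x_neq_y : x != y.
Proof. by apply: contraTneq exy => ->; rewrite girr. Qed.

Definition vxy : T' := exist _ x x_neq_y.

(* The quotient map V(G) -> V(G/e); [y] goes to [vxy] as the default value of [insubd]. *)
Definition merge (u : T) : T' := insubd vxy u.

Lemma merge_val (a : T') : merge (val a) = a.
Proof. exact: valKd. Qed.

Lemma val_merge u : u != y -> val (merge u) = u.
Proof. by move=> uy; rewrite /merge /insubd insubT. Qed.

Lemma merge_y : merge y = vxy.
Proof. by rewrite /merge /insubd insubF ?eqxx. Qed.

Lemma merge_x : merge x = vxy.
Proof. by apply: val_inj; rewrite val_merge // x_neq_y. Qed.

Lemma merge_xy z : (z == x) || (z == y) -> merge z = vxy.
Proof. by case/orP => /eqP ->; [exact: merge_x | exact: merge_y]. Qed.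

Lemma merge_Nclosed w u : u \in Nclosed g w -> merge u \in Nclosed g' (merge w).
Proof.
rewrite !in_Nclosed => /orP [/eqP -> | gwu]; first by rewrite eqxx.
have uw : u != w by apply: contraTneq gwu => ->; rewrite girr.
have [wxy|wxy] := boolP ((w == x) || (w == y));
have [uxy|uxy] := boolP ((u == x) || (u == y)).
- by rewrite !merge_xy // eqxx.
- rewrite (merge_xy wxy); apply/orP; right.
  move: uxy; rewrite negb_or => /andP [ux uy].
  rewrite /contract /= val_merge // eq_sym ux eqxx /= (negbTE ux) orbF.
  by case/orP: wxy => /eqP wE; subst w; rewrite gwu ?orbT.
- rewrite (merge_xy uxy); apply/orP; right.
  move: wxy; rewrite negb_or => /andP [wx wy].
  rewrite /contract /= val_merge // wx eqxx /= (negbTE wx) /=.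
  by case/orP: uxy => /eqP uE; subst u; rewrite ?gwu // (gsym y) gwu orbT.
- apply/orP; right.
  move: wxy uxy; rewrite !negb_or => /andP [wx wy] /andP [ux uy].
  by rewrite /contract /= !val_merge // eq_sym uw gwu.
Qed.

Lemma Nclosed_merge_inv (w' : T') u : val w' != x -> u != x -> u != y ->
  merge u \in Nclosed g' w' -> u \in Nclosed g (val w').
Proof.
move=> wx ux uy; rewrite !in_Nclosed => /orP [/eqP <- | ].
  by rewrite val_merge // eqxx.
rewrite /contract /= val_merge // (negbTE wx) (negbTE ux) /= orbF.
by case/andP => _ ->; rewrite orbT.
Qed.

Lemma Nclosed_vxy_inv u : u != x -> u != y ->
  merge u \in Nclosed g' vxy -> (u \in Nclosed g x) || (u \in Nclosed g y).
Proof.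
move=> ux uy; rewrite !in_Nclosed => /orP [/eqP e | ].
  by move: ux; rewrite -(val_merge uy) e eqxx.
rewrite /contract /= val_merge // eqxx (negbTE ux) /= orbF.
by case/andP => _ /orP [->|->]; rewrite ?orbT.
Qed.

Variable k : nat.

Definition lift_set (S' : {set T'}) : {set T} := [set u | merge u \in S'] :|: [set x].

Lemma card_lift_set S' : #|lift_set S'| <= #|S'|.+1.
Proof.
have sub : lift_set S' \subset (if vxy \in S' then y else x) |: (val @: S').
  apply/subsetP => u; rewrite !inE => /orP [Su | /eqP ->].
    have [uE | uy] := eqVneq u y; last by rewrite -(val_merge uy) imset_f ?orbT.
    by move: Su; rewrite uE merge_y => ->; rewrite eqxx.
  case: ifP => [vS | _]; last by rewrite eqxx.
  by rewrite (_ : x = val vxy) // imset_f ?orbT.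
rewrite (leq_trans (subset_leq_card sub)) // cardsU1 -add1n.
by rewrite leq_add ?leq_b1 ?leq_imset_card.
Qed.

Lemma Nclosed_x_sub_Ppow_lift S' i : Nclosed g x \subset Ppow g k (lift_set S') i.
Proof.
apply: subset_trans (NS_sub_Ppow _ _ _ _).
by apply: Nclosed_sub_NS; rewrite !inE eqxx orbT.
Qed.

Lemma card_unobserved_merge (P : {set T}) (P' : {set T'}) c :
  x \in P -> y \in P -> (forall u, merge u \in P' -> u \in P) ->
  #|Nclosed g c :\: P| <= #|Nclosed g' (merge c) :\: P'|.
Proof.
move=> xP yP P'P.
apply: leq_trans (leq_imset_card val _); apply: subset_leq_card.
apply/subsetP => z; rewrite inE => /andP [zP zN].
have zy : z != y by apply: contraNneq zP => ->.
rewrite -(val_merge zy) imset_f // inE merge_Nclosed // andbT.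
by apply: contra zP; exact: P'P.
Qed.

Lemma Ppow_lift_set S' i u :
  merge u \in Ppow g' k S' i -> u \in Ppow g k (lift_set S') i.
Proof.
have obs_xy j : (x \in Ppow g k (lift_set S') j) && (y \in Ppow g k (lift_set S') j).
  rewrite !(subsetP (Nclosed_x_sub_Ppow_lift _ _)) ?Nclosed_self //.
  by rewrite in_Nclosed exy orbT.
have [uxy | ] := boolP ((u == x) || (u == y)).
  by have [xP yP] := andP (obs_xy i); case/orP: uxy => /eqP ->.
rewrite negb_or => /andP [ux uy].
elim: i u ux uy => [|i IH] u ux uy.
  case/bigcupP => w' wS uN; apply/bigcupP.
  have [wx | wx] := eqVneq (val w') x; last first.
    by exists (val w'); [rewrite !inE merge_val wS | exact: Nclosed_merge_inv].
  have ew : w' = vxy by apply: val_inj.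
  move: uN wS; rewrite ew => /(Nclosed_vxy_inv ux uy) /orP [uN | uN] vS.
    by exists x; rewrite // !inE eqxx orbT.
  by exists y; rewrite // !inE merge_y vS.
case/psteP => w' /andP [wP c] uN; apply/psteP.
have [xP yP] := andP (obs_xy i).
have P'P v : merge v \in Ppow g' k S' i -> v \in Ppow g k (lift_set S') i.
  have [vmerged | ] := boolP ((v == x) || (v == y)).
    by case/orP: vmerged => /eqP ->.
  by rewrite negb_or => /andP [vx vy]; exact: IH.
have count v : merge v = w' -> #|Nclosed g v :\: Ppow g k (lift_set S') i| <= k.
  by move=> vw; rewrite (leq_trans _ c) // -vw card_unobserved_merge.
have [wx | wx] := eqVneq (val w') x; last first.
  exists (val w'); last exact: Nclosed_merge_inv.
  by rewrite P'P ?merge_val //= count ?merge_val.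
have ew : w' = vxy by apply: val_inj.
move: uN; rewrite ew => /(Nclosed_vxy_inv ux uy) /orP [uN | uN].
  by exists x; rewrite // xP count // merge_x.
by exists y; rewrite // yP count // merge_y.
Qed.

Lemma Ppow_lift_setT S' i : Ppow g' k S' i = setT -> Ppow g k (lift_set S') i = setT.
Proof.
by move=> e; apply/setP => u; rewrite inE; apply: Ppow_lift_set; rewrite e inE.
Qed.

Definition push_set (S : {set T}) : {set T'} := vxy |: (merge @: S).

Lemma card_push_set S : #|push_set S| <= #|S|.+1.
Proof. by rewrite cardsU1 -add1n leq_add ?leq_b1 // leq_imset_card. Qed.

Lemma Nclosed_vxy_sub_Ppow_push S i : Nclosed g' vxy \subset Ppow g' k (push_set S) i.
Proof.
apply: subset_trans (NS_sub_Ppow _ _ _ _).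
by apply: Nclosed_sub_NS; rewrite !inE eqxx.
Qed.

Lemma Ppow_push_set S i u : u \in Ppow g k S i -> merge u \in Ppow g' k (push_set S) i.
Proof.
elim: i u => [|i IH] u.
  case/bigcupP => w wS uN; apply/bigcupP; exists (merge w); last exact: merge_Nclosed.
  by rewrite !inE imset_f ?orbT.
case/psteP => w /andP [wP c] uN.
have [wxy | ] := boolP ((w == x) || (w == y)).
  apply: (subsetP (Nclosed_vxy_sub_Ppow_push S i.+1)).
  by rewrite -(merge_xy wxy) merge_Nclosed.
rewrite negb_or => /andP [wx wy].
apply/psteP; exists (merge w); last exact: merge_Nclosed.
rewrite IH //=; apply: leq_trans c.
apply: leq_trans (leq_imset_card merge _); apply: subset_leq_card.
apply/subsetP => z; rewrite inE => /andP [zP zN].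
have zx : val z != x.
  apply: contraNneq zP => zE; have -> : z = vxy by apply: val_inj.
  exact/(subsetP (Nclosed_vxy_sub_Ppow_push S i))/Nclosed_self.
rewrite -(merge_val z) imset_f // inE.
have -> : val z \in Nclosed g w.
  by rewrite -(val_merge wy) (Nclosed_merge_inv _ zx (valP z)) ?val_merge ?merge_val.
by rewrite andbT; apply: contra zP => /IH; rewrite merge_val.
Qed.

Lemma Ppow_push_setT S i : Ppow g k S i = setT -> Ppow g' k (push_set S) i = setT.
Proof.
by move=> e; apply/setP => u; rewrite inE -(merge_val u) Ppow_push_set // e inE.
Qed.

End Contraction.

Theorem mainTheorem4 (T : finType) (g : rel T)
  (gsym : symmetric g) (girr : irreflexive g)
  (k : nat) (kpos : 0 < k) (x y : T) (exy : g x y) :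
  gammaPk g k - 1 <= gammaPk (contract g x y) k <= gammaPk g k + 1 /\
  (gammaPk (contract g x y) k = gammaPk g k - 1 ->
     radPk g k <= radPk (contract g x y) k) /\
  (gammaPk (contract g x y) k = gammaPk g k + 1 ->
     radPk (contract g x y) k <= radPk g k).
Proof.
have card_lift := card_lift_set girr exy.
have Ppow_lift := Ppow_lift_setT gsym girr exy (k := k).
have card_push := card_push_set girr exy.
have Ppow_push := Ppow_push_setT gsym girr exy (k := k).
have gamma_le_lift := gammaPk_transfer card_lift Ppow_lift.
have gamma_le_push := gammaPk_transfer card_push Ppow_push.
split; first by rewrite gamma_le_push andbT leq_subLR addnC.
split=> gammaE; last exact: radPk_transfer card_push Ppow_push gammaE.
apply: radPk_transfer card_lift Ppow_lift _.
by rewrite gammaE subnK // (gammaPk_gt0 g k x).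
Qed.
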